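(* Let $a_n$ denote the maximum degree of a minimal monomial generator of $J(P_n)$. For every $n\geq5$, $a_n=\max\{a_{n-2}+1,\,a_{n-3}+2\}$. For every $n\geq 2$, $$a_n=\begin{cases}2k & \text{if } n=3k+1 \text{ or } n=3k,\\ 2k+1 & \text{if } n=3k+2.\end{cases}$$
   Context: $P_n$ is the path graph on vertices $x_1,\ldots,x_n$ with edges $\{x_i,x_{i+1}\}$, $1\le i\le n-1$, and $J(P_n)\subset K[x_1,\ldots,x_n]$ ($K$ a field) is its cover ideal, generated by the monomials $\prod_{x\in C}x$ with $C$ a minimal vertex cover of $P_n$. *)

From mathcomp Require Import all_boot.
Set Implicit Arguments. Unset Strict Implicit. Unset Printing Implicit Defensive.

(* The path graph P_n on vertices x_1..x_n is modelled on 'I_n (vertex i <-> x_{i+1});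
   its edges are {i, i+1} for i + 1 < n. *)
Definition path_edge (n : nat) (i j : 'I_n) : bool := (j : nat) == i.+1.

Definition vertex_cover (n : nat) (C : {set 'I_n}) : bool :=
  [forall i : 'I_n, forall j : 'I_n, path_edge i j ==> (i \in C) || (j \in C)].

Definition minimal_vertex_cover (n : nat) (C : {set 'I_n}) : bool :=
  minset (@vertex_cover n) C.

(* The minimal monomial generators of the cover ideal J(P_n) are the squarefree
   monomials prod_{x in C} x for C a minimal vertex cover; such a monomial has
   degree #|C|.  a n = maximum degree of a minimal monomial generator of J(P_n). *)
Definition a (n : nat) : nat :=
  \max_(C : {set 'I_n} | minimal_vertex_cover C) #|C|.

From mathcomp Require Import all_boot zify.
Set Implicit Arguments. Unset Strict Implicit.

(* A minimal vertex cover C of P_n is exactly a cover in which every vertex of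
   C has a neighbour outside C; hence the complement of C dominates P_n. Each
   vertex dominates at most three vertices, so #|~: C| >= ceil(n/3), i.e.
   #|C| <= n - ceil(n/3). Leaving out every third vertex, phased according to
   n mod 3 so that both ends are covered, gives a minimal cover attaining the
   bound. Thus a n = n - ceil(n/3) = floor(2n/3), and both claims are
   arithmetic. *)

Definition path_adj n (v w : 'I_n) : bool := path_edge v w || path_edge w v.

Lemma path_adjC n (v w : 'I_n) : path_adj v w = path_adj w v.
Proof. exact: orbC. Qed.

Definition dominates n (d v : 'I_n) : bool := (v == d) || path_adj d v.

Lemma vertex_coverP n (C : {set 'I_n}) :
  reflect (forall i j : 'I_n, path_edge i j -> (i \in C) || (j \in C))
          (vertex_cover C).
Proof.
apply: (iffP forallP) => [cov i j ij | cov i].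
  by move/forallP/(_ j)/implyP: (cov i); apply.
by apply/forallP => j; apply/implyP; apply: cov.
Qed.

Lemma minimal_vertex_coverP n (C : {set 'I_n}) :
  reflect (vertex_cover C /\
           forall v, v \in C -> exists2 w, w \notin C & path_adj v w)
          (minimal_vertex_cover C).
Proof.
apply: (iffP minsetP) => [[cov minC] | [cov priv]]; split=> //.
  move=> v vC.
  have /forallPn[i /forallPn[j]] : ~~ vertex_cover (C :\ v).
    apply/negP => covD.
    by have /setP/(_ v) := minC _ covD (subsetDl _ _); rewrite !inE eqxx vC.
  rewrite negb_imply !inE negb_or !negb_and !negbK => /and3P[ij iCv jCv].
  have /orP[iC | jC] := vertex_coverP _ cov i j ij.
  - have vi : i = v by apply/eqP; move: iCv; rewrite iC orbF.
    exists j; last by rewrite /path_adj -vi ij.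
    by move: jCv ij; rewrite -vi /path_edge => /orP[/eqP-> /eqP|//]; lia.
  - have vj : j = v by apply/eqP; move: jCv; rewrite jC orbF.
    exists i; last by rewrite /path_adj -vj ij orbT.
    by move: iCv ij; rewrite -vj /path_edge => /orP[/eqP-> /eqP|//]; lia.
move=> B covB sBC; apply/eqP; rewrite eqEsubset sBC /=.
apply/subsetP => v vC; apply/negPn/negP => vB.
have [w wC vw] := priv v vC.
have wB : w \notin B by apply: contra wC; apply: (subsetP sBC).
case/orP: vw => [vw | wv].
- by have := vertex_coverP _ covB v w vw; rewrite (negbTE vB) (negbTE wB).
- by have := vertex_coverP _ covB w v wv; rewrite (negbTE vB) (negbTE wB).
Qed.

Lemma minimal_vertex_cover_dominating n (C : {set 'I_n}) :
  minimal_vertex_cover C -> forall v, exists2 d, d \in ~: C & dominates d v.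
Proof.
case/minimal_vertex_coverP => _ priv v.
case vC: (v \in C); last by exists v; rewrite ?inE ?vC /dominates ?eqxx.
have [w wC vw] := priv v vC.
by exists w; rewrite ?inE // /dominates path_adjC vw orbT.
Qed.

Lemma dominating_card n (D : {set 'I_n}) :
  (forall v, exists2 d, d \in D & dominates d v) -> (n + 2) %/ 3 <= #|D|.
Proof.
move=> domD.
pose g v := s2val (sig2W (domD v)).
have gD v : g v \in D by rewrite /g; case: sig2W.
have gdom v : dominates (g v) v by rewrite /g; case: sig2W.
(* [v] is recovered from its dominator and its offset [v + 1 - g v] < 3. *)
pose f v := (g v, inord (v.+1 - g v) : 'I_3).
have dom_gap v : g v <= v.+1 <= g v + 2.
  by have := gdom v; rewrite /dominates /path_adj /path_edge -!val_eqE /=; lia.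
have f_inj : injective f.
  move=> u v [guv /(congr1 val)] /=.
  have := dom_gap u; have := dom_gap v; rewrite guv => gv gu.
  by rewrite !inordK => [uv||]; [apply/val_inj => /= | ..]; lia.
have fD : f @: [set: 'I_n] \subset setX D [set: 'I_3].
  by apply/subsetP => _ /imsetP[v _ ->]; rewrite in_setX /= gD in_setT.
have := subset_leq_card fD.
rewrite card_imset // cardsX !cardsT !card_ord; lia.
Qed.

Lemma minimal_vertex_cover_card n (C : {set 'I_n}) :
  minimal_vertex_cover C -> #|C| <= n - (n + 2) %/ 3.
Proof.
move/minimal_vertex_cover_dominating/dominating_card.
by have := cardsC C; rewrite card_ord; lia.
Qed.

Definition skip_phase n : nat := if n %% 3 == 0 then 1 else 0.

Lemma skip_phase_spec n :
  skip_phase n = 1 /\ n %% 3 = 0 \/ skip_phase n = 0 /\ n %% 3 <> 0.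
Proof. by rewrite /skip_phase; case: eqP; [left | right]. Qed.

(* Omitting x_(3j+2) when 3 divides n, and x_(3j+1) otherwise, keeps both
   end edges covered. *)
Definition cover_mod3 n : {set 'I_n} := [set i : 'I_n | i %% 3 != skip_phase n].

Lemma cover_mod3_minimal n : minimal_vertex_cover (cover_mod3 n).
Proof.
have ph := skip_phase_spec n.
apply/minimal_vertex_coverP; split.
  by apply/vertex_coverP => i j /eqP ij; rewrite !inE ij; apply/orP; lia.
move=> v; rewrite inE => /eqP vC.
have v_lt := ltn_ord v.
have [next | /eqP next] := eqVneq (v.+1 %% 3) (skip_phase n).
- have lt : v.+1 < n by lia.
  exists (Ordinal lt); rewrite ?inE /= ?next ?eqxx //.
  by rewrite /path_adj /path_edge eqxx.
- have lt : v.-1 < n by lia.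
  by exists (Ordinal lt); rewrite ?inE /= ?negbK /path_adj /path_edge /=; lia.
Qed.

Lemma cover_mod3_card n : n - (n + 2) %/ 3 <= #|cover_mod3 n|.
Proof.
have ph := skip_phase_spec n.
have blk_lt (v : 'I_n) : v %/ 3 < (n + 2) %/ 3 by have := ltn_ord v; lia.
pose blk v := Ordinal (blk_lt v).
have blk_inj : {in ~: cover_mod3 n &, injective blk}.
  move=> u v; rewrite !inE !negbK => /eqP hu /eqP hv [] uv.
  by apply/val_inj => /=; lia.
have : #|~: cover_mod3 n| <= (n + 2) %/ 3.
  by rewrite -[X in _ <= X]card_ord; apply: leq_card_in blk_inj.
by have := cardsC (cover_mod3 n); rewrite card_ord; lia.
Qed.

Lemma a_eq n : a n = n - (n + 2) %/ 3.
Proof.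
apply/eqP; rewrite eqn_leq; apply/andP; split.
  by apply/bigmax_leqP => C; apply: minimal_vertex_cover_card.
apply: leq_trans (cover_mod3_card n) _.
exact: (leq_bigmax_cond (F := fun C : {set 'I_n} => #|C|))
         (cover_mod3_minimal n).
Qed.

Theorem lemma5p2 :
  (forall n : nat, 5 <= n -> a n = maxn (a (n - 2)).+1 (a (n - 3)).+2) /\
  (forall n k : nat, 2 <= n ->
     ((n = 3 * k + 1 \/ n = 3 * k) -> a n = 2 * k) /\
     (n = 3 * k + 2 -> a n = 2 * k + 1)).
Proof.
split=> [n n_ge5 | n k _]; rewrite !a_eq; first lia.
by split; lia.
Qed.
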